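(* Suppose $\sigma$ is an automorphism of $D$. Then $f(t)=t^3-a\in D[t;\sigma]$ is irreducible if and only if $\sigma^2(b)\sigma(b)b\neq a$ for all $b\in D$.
   Context: $D$ is an associative division ring, $\sigma$ a ring automorphism of $D$, and $D[t;\sigma]$ the skew polynomial ring with $ta=\sigma(a)t$. A polynomial $f$ is irreducible if it is not a unit and has no factorization $f=gh$ with $\deg g,\deg h<\deg f$. *)

From HB Require Import structures.
From mathcomp Require Import all_boot all_order all_algebra.
Set Implicit Arguments. Unset Strict Implicit. Unset Printing Implicit Defensive.
Import GRing.Theory.
Local Open Scope ring_scope.

(* Skew polynomial ring D[t; s] with t a = s(a) t, represented on the additive
   group {poly D} (coefficient lists, p`_i = coefficient of t^i, written on the
   left: p = sum_i p_i t^i).  Product: (p_i t^i)(q_j t^j) = p_i s^i(q_j) t^(i+j). *)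
Definition skew_mul (D : nzRingType) (s : D -> D) (p q : {poly D}) : {poly D} :=
  \poly_(k < size p + size q) \sum_(i < k.+1) p`_i * iter i s q`_(k - i).

Definition skew_unit (D : nzRingType) (s : D -> D) (f : {poly D}) : Prop :=
  exists g : {poly D}, skew_mul s f g = 1 /\ skew_mul s g f = 1.

Definition skew_irreducible (D : nzRingType) (s : D -> D) (f : {poly D}) : Prop :=
  ~ skew_unit s f /\
  forall g h : {poly D}, f = skew_mul s g h ->
    ~ ((size g < size f)%N /\ (size h < size f)%N).

From HB Require Import structures.
From mathcomp Require Import all_boot all_order all_algebra.
From mathcomp Require Import zify.

(* Since D has no zero divisors and sigma is injective, degrees add up in
   D[t; sigma]: units are constants, and a proper factorization of t^3 - a has
   a linear factor on the left or on the right.  A right factor h_1 (t - b)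
   forces sigma^2(b) sigma(b) b = a by comparing coefficients, and conversely
   t^3 - sigma^2(b) sigma(b) b
     = (t^2 + sigma^2(b) t + sigma^2(b) sigma(b)) (t - b).
   A left factor t - c gives the same identity for b = sigma^-2(c), which is
   where surjectivity of sigma is needed. *)

Set Implicit Arguments.
Unset Strict Implicit.
Unset Printing Implicit Defensive.

Import GRing.Theory.
Local Open Scope ring_scope.

Section SkewDegree.

Variables (D : nzRingType) (s : {rmorphism D -> D}).
Implicit Types p q : {poly D}.

Lemma iter_rmorph0 n : iter n s 0 = 0.
Proof. by elim: n => //= n ->; rewrite rmorph0. Qed.

Lemma skew_mul_term_eq0 p q k i : ((size p + size q).-1 <= k)%N ->
  p`_i * iter i s q`_(k - i) = 0.
Proof.
move=> le_pq_k; have [lt_i_p | le_p_i] := ltnP i (size p).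
  rewrite [q`_(k - i)]nth_default ?iter_rmorph0 ?mulr0 //.
  (* The sizes are generalized because [lia] would treat their occurrences,
     elaborated at convertible but distinct types, as different atoms. *)
  by move: (size p) (size q) lt_i_p le_pq_k => m n; lia.
by rewrite nth_default ?mul0r.
Qed.

Lemma coef_skew_mul p q k :
  (skew_mul s p q)`_k = \sum_(i < k.+1) p`_i * iter i s q`_(k - i).
Proof.
rewrite coef_poly; case: ltnP => // le_pq_k; symmetry.
apply: big1 => i _; apply: skew_mul_term_eq0.
exact: leq_trans (leq_pred _) le_pq_k.
Qed.

Lemma skew_mul0p q : skew_mul s 0 q = 0.
Proof.
apply/polyP => k; rewrite coef_skew_mul coef0 big1 // => i _.
by rewrite coef0 mul0r.
Qed.

Lemma skew_mulp0 p : skew_mul s p 0 = 0.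
Proof.
apply/polyP => k; rewrite coef_skew_mul coef0 big1 // => i _.
by rewrite coef0 iter_rmorph0 mulr0.
Qed.

Lemma size_skew_mul_le p q :
  (size (skew_mul s p q) <= (size p + size q).-1)%N.
Proof.
apply/leq_sizeP => k le_pq_k; rewrite coef_skew_mul big1 // => i _.
exact: skew_mul_term_eq0.
Qed.

Lemma coef_skew_mul_lead p q :
  (skew_mul s p q)`_((size p).-1 + (size q).-1) =
  lead_coef p * iter (size p).-1 s (lead_coef q).
Proof.
rewrite coef_skew_mul (bigD1 (inord (size p).-1)) //= inordK ?addKn; last lia.
rewrite !lead_coefE big1 ?addr0 // => -[i /= lt_i].
rewrite -val_eqE /= inordK; last lia.
case: ltngtP => // [lt_i_p | lt_p_i] _.
  rewrite [q`_(_ - i)]nth_default ?iter_rmorph0 ?mulr0 //.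
  by move: (size p) (size q) lt_i_p => m n; lia.
by rewrite nth_default ?mul0r //; lia.
Qed.

Hypotheses (mulf_neq0 : forall x y : D, x != 0 -> y != 0 -> x * y != 0)
  (s_inj : injective s).

Lemma iter_rmorph_eq0 n x : (iter n s x == 0) = (x == 0).
Proof. by elim: n => //= n <-; rewrite -{1}(rmorph0 s) (inj_eq s_inj). Qed.

Lemma size_skew_mul p q : p != 0 -> q != 0 ->
  size (skew_mul s p q) = (size p + size q).-1.
Proof.
move=> nz_p nz_q; apply/anti_leq; rewrite size_skew_mul_le /=.
rewrite (polySpred nz_p) (polySpred nz_q) addSn addnS /= ltnNge.
apply/negP => /(nth_default 0)/eqP; apply/negP.
by rewrite coef_skew_mul_lead mulf_neq0 ?iter_rmorph_eq0 ?lead_coef_eq0.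
Qed.

Lemma size_skew_unit f : skew_unit s f -> size f = 1%N.
Proof.
case=> g [fg1 _].
have nz_f : f != 0.
  by apply: contra_eq_neq fg1 => ->; rewrite skew_mul0p eq_sym oner_neq0.
have nz_g : g != 0.
  by apply: contra_eq_neq fg1 => ->; rewrite skew_mulp0 eq_sym oner_neq0.
move: (size_skew_mul nz_f nz_g); rewrite fg1 size_poly1.
by move: nz_f nz_g; rewrite -!size_poly_gt0; lia.
Qed.

Lemma size_skew_factors f g h : f = skew_mul s g h -> f != 0 ->
  (size g + size h = (size f).+1)%N.
Proof.
move=> ->.
have [-> | nz_g] := eqVneq g 0; first by rewrite skew_mul0p eqxx.
have [-> | nz_h] := eqVneq h 0; first by rewrite skew_mulp0 eqxx.
rewrite size_skew_mul // (polySpred nz_g).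
by move: nz_h; rewrite -size_poly_gt0; lia.
Qed.

End SkewDegree.

Lemma skew_mul_XsubC_cubic (D : nzRingType) (s : {rmorphism D -> D}) (b : D) :
  skew_mul s ('X^2 + (s (s b))%:P * 'X + (s (s b) * s b)%:P) ('X - b%:P) =
  'X^3 - (s (s b) * s b * b)%:P.
Proof.
set q := _ + _%:P.
have size_q : (size q <= 3)%N.
  by apply/leq_sizeP => -[|[|[|j]]] // _; rewrite !coefE /= mulr0 !addr0.
apply/polyP => -[|[|[|[|k]]]]; last first.
  rewrite coefB coefXn coefC /= subrr nth_default //.
  apply: leq_trans (size_skew_mul_le _ _ _) _.
  by rewrite size_XsubC addn2 /= ltnS (leq_trans size_q).
all: rewrite coef_skew_mul !big_ord_recr big_ord0 /= !coefE /=.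
all: by rewrite !(rmorph0, rmorph1, rmorphB, oppr0, mulrN, mulr0, mulr1, mul1r,
  mul0r, add0r, addr0, subr0, sub0r, subrr).
Qed.

Lemma skew_mul_cubic_coefs (D : nzRingType) (s : {rmorphism D -> D}) (a : D)
    (g h : {poly D}) :
  skew_mul s g h = 'X^3 - a%:P -> (size g <= 3)%N -> (size h <= 3)%N ->
  [/\ g`_0 * h`_0 = - a,
      g`_0 * h`_1 + g`_1 * s h`_0 = 0,
      g`_0 * h`_2 + g`_1 * s h`_1 + g`_2 * s (s h`_0) = 0 &
      g`_1 * s h`_2 + g`_2 * s (s h`_1) = 1].
Proof.
move=> gh_f /leq_sizeP/(_ 3%N (leqnn _)) g3 /leq_sizeP/(_ 3%N (leqnn _)) h3.
have coef_f k : (skew_mul s g h)`_k = ('X^3 - a%:P)`_k by rewrite gh_f.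
move: (coef_f 0%N) (coef_f 1%N) (coef_f 2%N) (coef_f 3%N).
rewrite !coef_skew_mul !big_ord_recr !big_ord0 /= !coefE /=.
rewrite ?subSS !subn0 g3 h3.
by rewrite !(rmorph0, oppr0, mulr0, mul0r, add0r, addr0, sub0r, subr0).
Qed.

Section CubicLinearFactors.

Variables (D : unitRingType) (s : {rmorphism D -> D}) (a : D) (g h : {poly D}).
Hypotheses (Ddiv : forall x : D, x != 0 -> x \is a GRing.unit)
  (gh_f : skew_mul s g h = 'X^3 - a%:P).

Lemma cubic_right_linear_factor :
  (size g <= 3)%N -> size h = 2%N -> exists b, s (s b) * s b * b = a.
Proof.
move=> size_g size_h.
have [] := skew_mul_cubic_coefs gh_f size_g; first by rewrite size_h.
have h2 : h`_2 = 0 by rewrite nth_default ?size_h.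
have : lead_coef h != 0 by rewrite lead_coef_eq0 -size_poly_gt0 size_h.
rewrite lead_coefE size_h /= => /Ddiv h1_unit.
rewrite h2 !rmorph0 !(mulr0, add0r) => E0 E1 E2 E3.
have [b h0E] : exists b, h`_0 = - (h`_1 * b).
  by exists (- ((h`_1)^-1 * h`_0)); rewrite mulrN opprK mulVKr.
have e2 : g`_1 * s h`_1 = s (s b).
  rewrite -[LHS]opprK (addr0_eq E2) h0E !(rmorphN, rmorphM).
  by rewrite mulrN opprK mulrA E3 mul1r.
have e1 : g`_0 * h`_1 = s (s b) * s b.
  rewrite -[LHS]opprK (addr0_eq E1) h0E !(rmorphN, rmorphM).
  by rewrite mulrN opprK mulrA e2.
by exists b; rewrite -[a]opprK -E0 h0E mulrN opprK mulrA e1.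
Qed.

Hypothesis s_bij : bijective s.

Lemma cubic_left_linear_factor :
  size g = 2%N -> (size h <= 3)%N -> exists b, s (s b) * s b * b = a.
Proof.
move=> size_g size_h.
have [] := skew_mul_cubic_coefs gh_f _ size_h; first by rewrite size_g.
have g2 : g`_2 = 0 by rewrite nth_default ?size_g.
have : lead_coef g != 0 by rewrite lead_coef_eq0 -size_poly_gt0 size_g.
rewrite lead_coefE size_g /= => /Ddiv g1_unit.
rewrite g2 !(mul0r, addr0) => E0 E1 E2 E3.
have sh2_g1 : s h`_2 * g`_1 = 1.
  by rewrite -(mulKr g1_unit (s h`_2)) E3 mulr1 mulVr.
set c := - (g`_0 * h`_2).
have sh1 : s h`_1 = s h`_2 * c by rewrite /c (addr0_eq E2) mulrA sh2_g1 mul1r.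
have sh0 : s h`_0 = - (s h`_2 * (g`_0 * h`_1)).
  by rewrite -mulrN (addr0_eq E1) mulrA sh2_g1 mul1r.
have [b sbE] : exists b, s (s b) = c.
  by case: s_bij => s' _ ss'; exists (s' (s' c)); rewrite !ss'.
exists b; do 2 apply: (bij_inj s_bij).
rewrite !rmorphM sbE -[a]opprK -E0 !(rmorphN, rmorphM) sh0.
rewrite !(rmorphN, rmorphM) sh1 /c.
by rewrite !(mulrN, mulNr, opprK) !mulrA.
Qed.

End CubicLinearFactors.

Lemma divring_mulf_neq0 (D : unitRingType)
    (Ddiv : forall x : D, x != 0 -> x \is a GRing.unit) (x y : D) :
  x != 0 -> y != 0 -> x * y != 0.
Proof.
move=> /Ddiv x_unit; apply: contraNneq => xy0.
by rewrite -(mulKr x_unit y) xy0 mulr0.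
Qed.

Theorem mainTheorem14 (D : unitRingType)
  (Ddiv : forall x : D, x != 0 -> x \is a GRing.unit)
  (sigma : {rmorphism D -> D}) (sigma_bij : bijective sigma) (a : D) :
  skew_irreducible sigma ('X^3 - a%:P) <->
  (forall b : D, sigma (sigma b) * sigma b * b != a).
Proof.
have mulf_neq0 := divring_mulf_neq0 Ddiv; have sigma_inj := bij_inj sigma_bij.
have size_f : size ('X^3 - a%:P) = 4%N by rewrite size_XnsubC.
have nz_f : 'X^3 - a%:P != 0 by rewrite -size_poly_gt0 size_f.
split=> [[_ irr] b | noroot].
  apply/eqP => Nb.
  pose q := 'X^2 + (sigma (sigma b))%:P * 'X + (sigma (sigma b) * sigma b)%:P.
  have fE : 'X^3 - a%:P = skew_mul sigma q ('X - b%:P).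
    by rewrite skew_mul_XsubC_cubic Nb.
  have := size_skew_factors mulf_neq0 sigma_inj fE nz_f.
  by move/irr: fE; rewrite size_f size_XsubC; lia.
split=> [/(size_skew_unit mulf_neq0 sigma_inj) | g h fE]; rewrite size_f //.
move=> [lt_g lt_h]; have := size_skew_factors mulf_neq0 sigma_inj fE nz_f.
rewrite size_f => size_gh.
have [b Nb] : exists b, sigma (sigma b) * sigma b * b = a.
  have [size_g | size_h] : size g = 2%N \/ size h = 2%N by lia.
    exact: cubic_left_linear_factor Ddiv (esym fE) sigma_bij size_g lt_h.
  exact: cubic_right_linear_factor Ddiv (esym fE) lt_g size_h.
by move: (noroot b); rewrite Nb eqxx.
Qed.
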